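(* Let $(G,H,T)$ be an RCC loop folder and let $K\le G$ with $HG'\le K$. Then $|G:C_G(t)|\le|K:H|$ for all $t\in T$.
   Context: A loop folder is a triple $(G,H,T)$ with $G$ a finite group, $H\le G$, and $T\subseteq G$ with $1\in T$ such that $T$ is a set of representatives for the right cosets $H^g\backslash G$ for every $g\in G$; it is an RCC loop folder if $T$ is invariant under conjugation by $G$. $G'$ is the commutator subgroup. *)

From mathcomp Require Import all_boot all_fingroup all_solvable.
Set Implicit Arguments.
Unset Strict Implicit.
Unset Printing Implicit Defensive.
Local Open Scope group_scope.

Definition loop_folder (gT : finGroupType) (G H : {group gT}) (T : {set gT}) :=
  [/\ H \subset G, 1 \in T, T \subset G &
      forall g, g \in G -> is_transversal T (rcosets (H :^ g) G) G].

Definition rcc_loop_folder (gT : finGroupType) (G H : {group gT}) (T : {set gT}) :=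
  loop_folder G H T /\ forall g, g \in G -> T :^ g = T.

From mathcomp Require Import all_boot all_fingroup all_solvable.

Set Implicit Arguments.
Unset Strict Implicit.
Unset Printing Implicit Defensive.

Local Open Scope group_scope.

(* The conjugacy class t^G lies in T, and y |-> H (y t^-1) maps it into the
   right cosets of H in K, because t^g t^-1 = [g, t^-1] lies in G' <= K.  This
   map is injective: H y t^-1 = H z t^-1 forces H y = H z, and distinct
   elements of the transversal T lie in distinct cosets of H.  Hence
   |G : C_G(t)| = |t^G| <= |K : H|. *)

Section RcosetCounting.

Variable gT : finGroupType.
Implicit Types (G H K : {group gT}) (A X : {set gT}).

Lemma transversal_rcoset_inj G H X :
  is_transversal X (rcosets H G) G -> {in X &, injective (fun x => H :* x)}.
Proof.
move=> trX; have /andP[/and3P[_ tiP _] _] := trX.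
have pblockE x : x \in X -> pblock (rcosets H G) x = H :* x.
  move=> Xx; apply: def_pblock tiP _ (rcoset_refl H x).
  by apply/rcosetsP; exists x; rewrite ?(subsetP (transversal_sub trX)).
by move=> x y Xx Xy /=; rewrite -!pblockE //; exact: (pblock_inj trX).
Qed.

Lemma card_le_indexg_rcoset_inj H K A x :
  {in A &, injective (fun y => H :* y)} -> A :* x \subset K ->
  #|A| <= #|K : H|.
Proof.
move=> injHA sAxK; rewrite -(@card_in_imset _ _ (fun y => H :* (y * x))).
  apply/subset_leq_card/subsetP=> _ /imsetP[y Ay ->].
  apply/rcosetsP; exists (y * x) => //.
  by apply: (subsetP sAxK); apply/rcosetP; exists y.
by move=> y z Ay Az /=; rewrite !rcosetM => /rcoset_inj; apply: injHA.
Qed.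

Lemma class_mulV_sub_der1 G t : t \in G -> t ^: G :* t^-1 \subset G^`(1).
Proof.
move=> Gt; apply/subsetP=> _ /rcosetP[_ /imsetP[g Gg ->] ->].
by rewrite -{1}(invgK t) -commgEr mem_commg ?groupV.
Qed.

End RcosetCounting.

Theorem lemma3p3 (gT : finGroupType) (G H K : {group gT}) (T : {set gT}) :
  rcc_loop_folder G H T ->
  K \subset G -> H * G^`(1) \subset K ->
  forall t, t \in T -> #|G : 'C_G[t]| <= #|K : H|.
Proof.
move=> [[_ _ sTG trT] nTG] _ sHG'K t Tt.
have trT1 : is_transversal T (rcosets H G) G.
  by have := trT 1 (group1 G); rewrite conjsg1.
have sClT : t ^: G \subset T.
  by apply/subsetP=> _ /imsetP[g Gg ->]; rewrite -(nTG g Gg) memJ_conjg.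
rewrite index_cent1; apply: (card_le_indexg_rcoset_inj (x := t^-1)).
  by apply: sub_in2 (transversal_rcoset_inj trT1); apply/subsetP.
apply: subset_trans (class_mulV_sub_der1 (subsetP sTG t Tt)) _.
exact: subset_trans (mulG_subr _ _) sHG'K.
Qed.
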